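(* Let $Y_0$ be $\mathbb Z_+$-valued with $(m-1)\mathbf E(Y_0m^{Y_0})=\mathbf E(m^{Y_0})<\infty$. Fix an integer $i\ge0$ and let $N_n$ denote either $N_n^\#$ or $N_n^{(i)}$. Then for all $n\ge1$, $$\mathbf E[m^{Y_n}(1+Y_n)N_n]=\mathbf E[m^{Y_0}(1+Y_0)N_0]\prod_{k=0}^{n-1}[\mathbf E(m^{Y_k})]^{m-1}.$$ (Here $\mathbf E[m^{Y_0}(1+Y_0)N_0^{(i)}]=m^i(1+i)\mathbf P(Y_0=i)$ and $\mathbf E[m^{Y_0}(1+Y_0)N_0^\#]=\mathbf E[m^{Y_0}(1+Y_0)]$.)
   Context: Fix an integer $m\ge2$. Hierarchical representation: on a reversed $m$-ary tree (each vertex $x$ of generation $|x|\ge1$ has $m$ parents $x^{(1)},\dots,x^{(m)}$ in generation $|x|-1$ and each vertex a unique child in the next generation), let $Y(x)$, $|x|=0$, be i.i.d. with the law of $Y_0$ and $Y(x):=(Y(x^{(1)})+\cdots+Y(x^{(m)})-1)^+$ for $|x|\ge1$. A path leading to $x$ is $(x_0,\dots,x_{|x|}=x)$ with $|x_j|=j$ and $x_{j+1}$ the child of $x_j$; it is open if for every vertex $z$ on it with $|z|\ge1$, $Y(z^{(1)})+\cdots+Y(z^{(m)})\ge1$ (paths with $|x|=0$ are open). $N^\#(x)$ is the number of open paths leading to $x$, $N^{(i)}(x)$ the number of those with $Y(x_0)=i$. For a fixed vertex $\mathfrak e_n$ of generation $n$ (with $\mathfrak e_{n+1}$ the child of $\mathfrak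 e_n$), $N_n^\#:=N^\#(\mathfrak e_n)$, $N_n^{(i)}:=N^{(i)}(\mathfrak e_n)$, $Y_n:=Y(\mathfrak e_n)$; $Y_n$ has the law of the $n$-th term of the recursive system $Y_{n+1}\overset d=(Y_{n,1}+\cdots+Y_{n,m}-1)^+$. *)

From Stdlib Require Import Reals List Arith.
Import ListNotations.
Open Scope R_scope.

(* Vertices above the fixed vertex e_n are encoded by addresses: e_n has
   address [], and the j-th parent (0 <= j < m) of the vertex with address w
   is the vertex with address (j :: w).  A vertex of generation n - k above
   e_n has an address of length k. *)

Fixpoint addrs (m k : nat) : list (list nat) :=
  match k with
  | O => [[]]
  | S k => flat_map (fun u => map (fun j => j :: u) (seq 0 m)) (addrs m k)
  end.

(* Y(x) for a vertex x of generation k (counted from the leaves) at address w,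
   given the generation-0 values c.  Truncated nat subtraction is (.)^+. *)
Fixpoint Yv (m : nat) (c : list nat -> nat) (k : nat) (w : list nat) : nat :=
  match k with
  | O => c w
  | S k => (list_sum (map (fun j => Yv m c k (j :: w)) (seq 0 m)) - 1)%nat
  end.

(* Weighted number of open paths leading to the vertex of generation k at
   address w; a path starting at x_0 is counted with weight wt (Y(x_0)).
   wt = 1 gives N^#, wt = indicator of {i} gives N^(i). *)
Fixpoint Nv (m : nat) (c : list nat -> nat) (wt : nat -> nat)
         (k : nat) (w : list nat) : nat :=
  match k with
  | O => wt (c w)
  | S k =>
      if (1 <=? list_sum (map (fun j => Yv m c k (j :: w)) (seq 0 m)))%nat
      then list_sum (map (fun j => Nv m c wt k (j :: w)) (seq 0 m))
      else O
  end.

Definition weight (sharp : bool) (i : nat) (y : nat) : nat :=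
  if sharp then 1%nat else if Nat.eqb y i then 1%nat else 0%nat.

Fixpoint assign (L : list (list nat)) (vals : list nat) (a : list nat) : nat :=
  match L with
  | [] => O
  | l :: L => if list_eq_dec Nat.eq_dec l a then hd O vals
              else assign L (tl vals) a
  end.

(* HasExp p K f v : for K i.i.d. variables with law p on nat, the
   (nonnegative) function f of the vector of their values has (finite)
   expectation v; computed as an iterated series (Tonelli). *)
Inductive HasExp (p : nat -> R) : nat -> (list nat -> R) -> R -> Prop :=
| HasExp0 : forall f, HasExp p O f (f [])
| HasExpS : forall K f (g : nat -> R) v,
    (forall y, HasExp p K (fun l => f (y :: l)) (g y)) ->
    infinite_sum (fun y => p y * g y) v ->
    HasExp p (S K) f v.

(* Expectation of a functional F of the i.i.d. generation-0 values (law p)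
   on the m^n leaves of the tree above e_n. *)
Definition Expect (p : nat -> R) (m n : nat) (F : (list nat -> nat) -> R)
  (v : R) : Prop :=
  HasExp p (m ^ n) (fun vals => F (assign (addrs m n) vals)) v.

Definition Rprod_upto (e : nat -> R) (n : nat) : R :=
  fold_right Rmult 1 (map e (seq 0 n)).

From Stdlib Require Import Reals List Arith Lia Lra.
From Stdlib Require Import IndefiniteDescription.
From Coquelicot Require Import Coquelicot.
Import ListNotations.
Open Scope R_scope.

(* Proof of Proposition 5.1.  For the pair (Y_n, N_n) consider the four
   moments tilted by m^Y:
     B = E(m^Y), A = E(Y m^Y), C = E(N m^Y), D = E(N Y m^Y),
   so that the quantity of the theorem is E[m^Y (1+Y) N] = C + D.
   The vertex e_(n+1) has m parents carrying i.i.d. copies of (Y_n, N_n);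
   with S, T their sums, Y_(n+1) = (S-1)^+ and N_(n+1) = 1{S >= 1} T.
   By independence E(m^S) = B^m, E(S m^S) = m A B^(m-1) and
   E(T S m^S) = m D B^(m-1) + m (m-1) C A B^(m-2).  Pointwise identities
   then give (m-1) A' - B' = (m-1) A B^(m-1) - B^m and
   C' + D' = E(T S m^S) / m, so the relation (m-1) A = B propagates from
   generation 0 to all generations and C' + D' = B^(m-1) (C + D). *)

Lemma infinite_sum_ext (f g : nat -> R) v :
  (forall k, f k = g k) -> infinite_sum f v -> infinite_sum g v.
Proof.
  intros Efg Hf. apply is_series_Reals. apply is_series_Reals in Hf.
  now apply (is_series_ext f).
Qed.

Lemma infinite_sum_plus (f g : nat -> R) a b :
  infinite_sum f a -> infinite_sum g b -> infinite_sum (fun k => f k + g k) (a + b).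
Proof.
  intros Hf Hg. apply is_series_Reals. apply is_series_Reals in Hf, Hg.
  exact (is_series_plus _ _ _ _ Hf Hg).
Qed.

Lemma infinite_sum_scal (f : nat -> R) c a :
  infinite_sum f a -> infinite_sum (fun k => c * f k) (c * a).
Proof.
  intros Hf. apply is_series_Reals. apply is_series_Reals in Hf.
  exact (is_series_scal c _ _ Hf).
Qed.

Lemma infinite_sum_le (f g : nat -> R) b :
  (forall k, 0 <= f k <= g k) -> infinite_sum g b ->
  exists a, infinite_sum f a /\ 0 <= a <= b.
Proof.
  intros Hfg Hg. apply is_series_Reals in Hg.
  assert (Ef : ex_series f).
  { apply (ex_series_le f g); [|now exists b].
    intros k. change (Rabs (f k) <= g k). rewrite Rabs_pos_eq; apply Hfg. }
  exists (Series f). split; [apply is_series_Reals, Series_correct, Ef|]. split.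
  - rewrite <- (Rmult_0_l (Series f)), <- Series_scal_l.
    apply Series_le; [|exact Ef]. intros k. specialize (Hfg k). lra.
  - rewrite <- (is_series_unique g b Hg).
    apply Series_le; [apply Hfg|now exists b].
Qed.

Lemma HasExp_inv p K f v :
  HasExp p (S K) f v -> exists g,
    (forall y, HasExp p K (fun l => f (y :: l)) (g y)) /\
    infinite_sum (fun y => p y * g y) v.
Proof. intros H. inversion H; subst. eauto. Qed.

Lemma HasExp_ext p K f g v :
  (forall l, f l = g l) -> HasExp p K f v -> HasExp p K g v.
Proof.
  intros Efg H. revert g Efg. induction H as [f|K f g v Hg IH Hsum]; intros f' Efg.
  - rewrite Efg. constructor.
  - apply HasExpS with (g := g); [|exact Hsum].
    intros y. apply IH. intros l. apply Efg.
Qed.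

Lemma HasExp_unique p K f v w : HasExp p K f v -> HasExp p K f w -> v = w.
Proof.
  intros H. revert w. induction H as [f|K f g v Hg IH Hsum]; intros w Hw.
  - now inversion Hw.
  - apply HasExp_inv in Hw as [g' [Hg' Hsum']].
    assert (Eg : forall y, g y = g' y) by (intros y; apply IH, Hg').
    eapply uniqueness_sum; [exact Hsum|].
    eapply infinite_sum_ext; [|exact Hsum']. intros y. now rewrite Eg.
Qed.

Lemma HasExp_plus p K f g a b :
  HasExp p K f a -> HasExp p K g b -> HasExp p K (fun l => f l + g l) (a + b).
Proof.
  intros H. revert g b. induction H as [f|K f g v Hg IH Hsum]; intros g' b Hb.
  - inversion Hb; subst. constructor.
  - apply HasExp_inv in Hb as [g2 [Hg2 Hsum2]].
    apply HasExpS with (g := fun y => g y + g2 y); [intros y; apply IH, Hg2|].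
    eapply infinite_sum_ext; [|exact (infinite_sum_plus _ _ _ _ Hsum Hsum2)].
    intros y. simpl. ring.
Qed.

Lemma HasExp_scal p K f c a :
  HasExp p K f a -> HasExp p K (fun l => c * f l) (c * a).
Proof.
  intros H. induction H as [f|K f g v Hg IH Hsum].
  - constructor.
  - apply HasExpS with (g := fun y => c * g y); [exact IH|].
    eapply infinite_sum_ext; [|exact (infinite_sum_scal _ c _ Hsum)].
    intros y. simpl. ring.
Qed.

Lemma HasExp_le p K f g b :
  (forall y, 0 <= p y) -> (forall l, 0 <= f l <= g l) -> HasExp p K g b ->
  exists a, HasExp p K f a /\ 0 <= a <= b.
Proof.
  intros Hp Hfg H. revert f Hfg. induction H as [g|K g g' b Hg IH Hsum]; intros f Hfg.
  - exists (f []). split; [constructor|apply Hfg].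
  - assert (Hsec : forall y, exists a,
               HasExp p K (fun l => f (y :: l)) a /\ 0 <= a <= g' y)
      by (intros y; apply IH; intros l; apply Hfg).
    apply functional_choice in Hsec as [u Hu].
    destruct (infinite_sum_le (fun y => p y * u y) (fun y => p y * g' y) b)
      as [a [Ha Hab]]; [|exact Hsum|].
    + intros y. destruct (Hu y) as [_ Huy]. specialize (Hp y). split; nra.
    + exists a. split; [|exact Hab]. apply HasExpS with (g := u); [apply Hu|exact Ha].
Qed.

Lemma HasExp_indep p K1 K2 f g a b :
  HasExp p K1 f a -> HasExp p K2 g b ->
  HasExp p (K1 + K2) (fun l => f (firstn K1 l) * g (skipn K1 l)) (a * b).
Proof.
  intros H. revert g b. induction H as [f|K f g' v Hg IH Hsum]; intros g b Hb.
  - exact (HasExp_scal _ _ _ (f []) _ Hb).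
  - apply HasExpS with (g := fun y => g' y * b); [intros y; exact (IH y g b Hb)|].
    rewrite Rmult_comm.
    eapply infinite_sum_ext; [|exact (infinite_sum_scal _ b _ Hsum)].
    intros y. simpl. ring.
Qed.

Lemma HasExp_single p f v :
  infinite_sum (fun y => p y * f [y]) v -> HasExp p 1 f v.
Proof.
  intros H. apply HasExpS with (g := fun y => f [y]); [|exact H].
  intros y. apply HasExp0.
Qed.

Lemma HasExp_const p f c : (forall l, f l = c) -> HasExp p 0 f c.
Proof. intros Hf. rewrite <- (Hf []). apply HasExp0. Qed.

Definition Moments (p : nat -> R) (x : R) (K : nat) (y n : list nat -> nat)
  (B A C D : R) : Prop :=
  HasExp p K (fun l => x ^ y l) B /\
  HasExp p K (fun l => INR (y l) * x ^ y l) A /\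
  HasExp p K (fun l => INR (n l) * x ^ y l) C /\
  HasExp p K (fun l => INR (n l) * INR (y l) * x ^ y l) D.

Fixpoint block_sum (K : nat) (f : list nat -> nat) (r : nat) (v : list nat) : nat :=
  match r with
  | O => O
  | S r => (f (firstn K v) + block_sum K f r (skipn K v))%nat
  end.

(* Tilted moments of sums of r independent copies: with the moments
   B, A, C, D of one copy, E(S x^S) = r A B^(r-1) and
   E(T S x^S) = r D B^(r-1) + r (r-1) C A B^(r-2). *)
Definition sum_moment_Y (B A : R) (r : nat) : R := INR r * A * B ^ (r - 1).

Definition sum_moment_NY (B A C D : R) (r : nat) : R :=
  INR r * D * B ^ (r - 1) + INR r * INR (r - 1) * C * A * B ^ (r - 2).

Lemma sum_moment_Y_S B A r :
  sum_moment_Y B A (S r) = A * B ^ r + B * sum_moment_Y B A r.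
Proof.
  unfold sum_moment_Y. destruct r as [|r]; [simpl; ring|].
  replace (S (S r) - 1)%nat with (S r) by lia. replace (S r - 1)%nat with r by lia.
  rewrite (S_INR (S r)). simpl pow. ring.
Qed.

Lemma sum_moment_NY_S B A C D r :
  sum_moment_NY B A C D (S r) =
  D * B ^ r + C * sum_moment_Y B A r + A * sum_moment_Y B C r + B * sum_moment_NY B A C D r.
Proof.
  unfold sum_moment_NY, sum_moment_Y. destruct r as [|[|r]]; [simpl; ring|simpl; ring|].
  replace (S (S (S r)) - 1)%nat with (S (S r)) by lia.
  replace (S (S (S r)) - 2)%nat with (S r) by lia.
  replace (S (S r) - 1)%nat with (S r) by lia.
  replace (S (S r) - 2)%nat with r by lia.
  replace (S r - 1)%nat with r by lia.
  rewrite !S_INR. simpl pow. ring.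
Qed.

Lemma Moments_block_sum p x K y n B A C D :
  Moments p x K y n B A C D -> forall r,
  Moments p x (r * K) (block_sum K y r) (block_sum K n r)
    (B ^ r) (sum_moment_Y B A r) (sum_moment_Y B C r) (sum_moment_NY B A C D r).
Proof.
  intros [HB [HA [HC HD]]] r.
  induction r as [|r [IB [IA [IC ID]]]].
  { unfold sum_moment_Y, sum_moment_NY. split; [|split; [|split]];
      apply HasExp_const; intros l; simpl; ring. }
  rewrite sum_moment_Y_S, sum_moment_Y_S, sum_moment_NY_S.
  split; [|split; [|split]].
  - eapply HasExp_ext; [|exact (HasExp_indep _ _ _ _ _ _ _ HB IB)].
    intros v. simpl. now rewrite pow_add.
  - eapply HasExp_ext; [|exact (HasExp_plus _ _ _ _ _ _
      (HasExp_indep _ _ _ _ _ _ _ HA IB) (HasExp_indep _ _ _ _ _ _ _ HB IA))].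
    intros v. simpl. rewrite pow_add, plus_INR. ring.
  - eapply HasExp_ext; [|exact (HasExp_plus _ _ _ _ _ _
      (HasExp_indep _ _ _ _ _ _ _ HC IB) (HasExp_indep _ _ _ _ _ _ _ HB IC))].
    intros v. simpl. rewrite pow_add, plus_INR. ring.
  - rewrite (Rplus_assoc (_ + _)).
    eapply HasExp_ext; [|exact (HasExp_plus _ _ _ _ _ _
      (HasExp_plus _ _ _ _ _ _ (HasExp_indep _ _ _ _ _ _ _ HD IB)
                               (HasExp_indep _ _ _ _ _ _ _ HC IA))
      (HasExp_plus _ _ _ _ _ _ (HasExp_indep _ _ _ _ _ _ _ HA IC)
                               (HasExp_indep _ _ _ _ _ _ _ HB ID)))].
    intros v. simpl. rewrite pow_add, !plus_INR. ring.
Qed.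

Lemma Moments_le p x K y n y' n' B A C D :
  (forall k, 0 <= p k) -> 1 <= x ->
  (forall l, (y' l <= y l)%nat) -> (forall l, (n' l <= n l)%nat) ->
  Moments p x K y n B A C D ->
  exists B' A' C' D', Moments p x K y' n' B' A' C' D'.
Proof.
  intros Hp Hx Hy Hn [HB [HA [HC HD]]].
  assert (Hpow : forall l, 0 <= x ^ y' l <= x ^ y l).
  { intros l. split; [apply pow_le; lra|apply Rle_pow; auto]. }
  assert (HyR : forall l, 0 <= INR (y' l) <= INR (y l))
    by (intros l; split; [apply pos_INR|apply le_INR, Hy]).
  assert (HnR : forall l, 0 <= INR (n' l) <= INR (n l))
    by (intros l; split; [apply pos_INR|apply le_INR, Hn]).
  assert (Hprod : forall a b c d, 0 <= a <= b -> 0 <= c <= d -> 0 <= a * c <= b * d)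
    by (intros; split; [apply Rmult_le_pos|apply Rmult_le_compat]; lra).
  destruct (HasExp_le p K (fun l => x ^ y' l) _ _ Hp Hpow HB) as [B' [HB' _]].
  destruct (HasExp_le p K (fun l => INR (y' l) * x ^ y' l) _ _ Hp
              (fun l => Hprod _ _ _ _ (HyR l) (Hpow l)) HA) as [A' [HA' _]].
  destruct (HasExp_le p K (fun l => INR (n' l) * x ^ y' l) _ _ Hp
              (fun l => Hprod _ _ _ _ (HnR l) (Hpow l)) HC) as [C' [HC' _]].
  destruct (HasExp_le p K (fun l => INR (n' l) * INR (y' l) * x ^ y' l) _ _ Hp
              (fun l => Hprod _ _ _ _ (Hprod _ _ _ _ (HnR l) (HyR l)) (Hpow l)) HD)
    as [D' [HD' _]].
  exists B', A', C', D'. repeat split; assumption.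
Qed.

(* The tree above e_(n+1): its leaves are the m blocks of m^n consecutive
   leaves lying above the m parents of e_(n+1), so Y and N at e_(n+1) are
   computed from the values of Y and N at the parents, each a function of
   its own block of coordinates. *)

Lemma flat_map_flat_map {A B C} (G : B -> list C) (H : A -> list B) L :
  flat_map G (flat_map H L) = flat_map (fun x => flat_map G (H x)) L.
Proof. induction L as [|a L IH]; simpl; auto. now rewrite flat_map_app, IH. Qed.

Lemma addrs_S m n :
  addrs m (S n) = flat_map (fun j => map (fun l => l ++ [j]) (addrs m n)) (seq 0 m).
Proof.
  induction n as [|n IH].
  - simpl. rewrite app_nil_r. induction (seq 0 m) as [|a L IHL]; simpl; now f_equal.
  - change (addrs m (S (S n))) with
      (flat_map (fun u => map (fun j => j :: u) (seq 0 m)) (addrs m (S n))).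
    rewrite IH at 1. rewrite flat_map_flat_map. apply flat_map_ext. intros j.
    simpl. clear IH. induction (addrs m n) as [|a L IHL]; simpl; auto.
    now rewrite IHL, map_app, map_map.
Qed.

Lemma addrs_length m n : length (addrs m n) = (m ^ n)%nat.
Proof.
  induction n as [|n IH]; simpl; auto. rewrite <- IH.
  clear IH. induction (addrs m n) as [|a L IHL]; simpl; [lia|].
  rewrite length_app, length_map, length_seq, IHL. lia.
Qed.

Lemma in_addrs_S m k l j : In l (addrs m k) -> (j < m)%nat -> In (l ++ [j]) (addrs m (S k)).
Proof.
  intros Hl Hj. rewrite addrs_S. apply in_flat_map. exists j.
  split; [apply in_seq; lia|apply in_map_iff; eauto].
Qed.

Lemma assign_in L1 L2 v a : In a L1 -> assign (L1 ++ L2) v a = assign L1 v a.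
Proof.
  revert v; induction L1 as [|b L1 IH]; intros v Hin; simpl in *; [contradiction|].
  destruct (list_eq_dec Nat.eq_dec b a); auto. destruct Hin; [congruence|auto].
Qed.

Lemma assign_notin L1 L2 v a :
  ~ In a L1 -> assign (L1 ++ L2) v a = assign L2 (skipn (length L1) v) a.
Proof.
  revert v; induction L1 as [|b L1 IH]; intros v Hin; simpl in *; auto.
  destruct (list_eq_dec Nat.eq_dec b a); [exfalso; auto|].
  rewrite IH by tauto. destruct v; simpl; auto. now destruct (length L1).
Qed.

Lemma assign_firstn L v a : assign L v a = assign L (firstn (length L) v) a.
Proof.
  revert v; induction L as [|b L IH]; intros v; simpl; auto.
  destruct v; simpl; destruct (list_eq_dec Nat.eq_dec b a); auto.
Qed.

Lemma assign_map (h : list nat -> list nat) L v a :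
  (forall x y, h x = h y -> x = y) -> assign (map h L) v (h a) = assign L v a.
Proof.
  intros Hh. revert v; induction L as [|b L IH]; intros v; simpl; auto.
  destruct (list_eq_dec Nat.eq_dec (h b) (h a)), (list_eq_dec Nat.eq_dec b a);
    subst; auto; [apply Hh in e; contradiction|congruence].
Qed.

Definition block (K j : nat) (v : list nat) : list nat := firstn K (skipn (j * K) v).

Lemma block_sum_blocks K f r v :
  block_sum K f r v = list_sum (map (fun j => f (block K j v)) (seq 0 r)).
Proof.
  revert v; induction r as [|r IH]; intros v; simpl; auto. f_equal.
  rewrite IH, <- seq_shift, map_map. f_equal. apply map_ext. intros j.
  unfold block. simpl. rewrite skipn_skipn. do 3 f_equal. lia.
Qed.

Lemma assign_block Ln l r :
  In l Ln -> forall j0 j v, (j0 <= j < j0 + r)%nat ->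
  assign (flat_map (fun j => map (fun l => l ++ [j]) Ln) (seq j0 r)) v (l ++ [j])
  = assign Ln (block (length Ln) (j - j0) v) l.
Proof.
  intros Hl. induction r as [|r IH]; intros j0 j v Hj; [lia|]. simpl.
  assert (Hinj : forall j1 (x y : list nat), x ++ [j1] = y ++ [j1] -> x = y)
    by (intros j1 x y E; apply app_inj_tail in E; tauto).
  destruct (Nat.eq_dec j j0) as [->|Hne].
  - rewrite assign_in by (apply in_map_iff; eauto).
    rewrite (assign_map (fun l => l ++ [j0])) by apply Hinj.
    rewrite Nat.sub_diag. unfold block. apply assign_firstn.
  - rewrite assign_notin.
    + rewrite IH by lia. rewrite length_map. unfold block.
      replace (j - j0)%nat with (S (j - S j0)) by lia. simpl.
      now rewrite skipn_skipn, Nat.add_comm.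
    + intros Hin. apply in_map_iff in Hin as [x [E _]].
      apply app_inj_tail in E as [_ E]. congruence.
Qed.

Lemma Yv_app m c k w j : Yv m c k (w ++ [j]) = Yv m (fun a => c (a ++ [j])) k w.
Proof.
  revert w; induction k as [|k IH]; intros w; simpl; auto.
  do 2 f_equal. apply map_ext. intros i. apply (IH (i :: w)).
Qed.

Lemma Nv_app m c wt k w j :
  Nv m c wt k (w ++ [j]) = Nv m (fun a => c (a ++ [j])) wt k w.
Proof.
  revert w; induction k as [|k IH]; intros w; simpl; auto.
  rewrite (map_ext (fun i => Yv m c k (i :: w ++ [j]))
                   (fun i => Yv m (fun a => c (a ++ [j])) k (i :: w)))
    by (intros i; apply (Yv_app m c k (i :: w))).
  rewrite (map_ext (fun i => Nv m c wt k (i :: w ++ [j]))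
                   (fun i => Nv m (fun a => c (a ++ [j])) wt k (i :: w)))
    by (intros i; apply (IH (i :: w))).
  reflexivity.
Qed.

Lemma leaves_above m k w l j :
  In l (addrs m k) -> In j (seq 0 m) -> In (l ++ [j]) (addrs m (S k)) /\
  l ++ j :: w = (l ++ [j]) ++ w.
Proof.
  intros Hl Hj. apply in_seq in Hj. split; [apply in_addrs_S; auto; lia|].
  now rewrite <- app_assoc.
Qed.

Lemma Yv_local m c c' k w :
  (forall l, In l (addrs m k) -> c (l ++ w) = c' (l ++ w)) -> Yv m c k w = Yv m c' k w.
Proof.
  revert w; induction k as [|k IH]; intros w H; simpl; [apply (H []); simpl; auto|].
  do 2 f_equal. apply map_ext_in. intros j Hj. apply IH. intros l Hl.
  destruct (leaves_above m k w l j Hl Hj) as [Hin ->]. now apply H.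
Qed.

Lemma Nv_local m c c' wt k w :
  (forall l, In l (addrs m k) -> c (l ++ w) = c' (l ++ w)) -> Nv m c wt k w = Nv m c' wt k w.
Proof.
  revert w; induction k as [|k IH]; intros w H; simpl; [f_equal; apply (H []); simpl; auto|].
  assert (Hpar : forall j, In j (seq 0 m) -> forall l, In l (addrs m k) ->
                 c (l ++ j :: w) = c' (l ++ j :: w)).
  { intros j Hj l Hl. destruct (leaves_above m k w l j Hl Hj) as [Hin ->]. now apply H. }
  rewrite (map_ext_in (fun j => Yv m c k (j :: w)) (fun j => Yv m c' k (j :: w)))
    by (intros j Hj; apply Yv_local, Hpar, Hj).
  rewrite (map_ext_in (fun j => Nv m c wt k (j :: w)) (fun j => Nv m c' wt k (j :: w)))
    by (intros j Hj; apply IH, Hpar, Hj).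
  reflexivity.
Qed.

Definition Ylevel (m n : nat) (vals : list nat) : nat :=
  Yv m (assign (addrs m n) vals) n [].

Definition Nlevel (m : nat) (wt : nat -> nat) (n : nat) (vals : list nat) : nat :=
  Nv m (assign (addrs m n) vals) wt n [].

Lemma assign_parent m n v j l :
  (j < m)%nat -> In l (addrs m n) ->
  assign (addrs m (S n)) v (l ++ [j]) = assign (addrs m n) (block (m ^ n) j v) l.
Proof.
  intros Hj Hl. rewrite addrs_S, assign_block by (auto; lia).
  now rewrite addrs_length, Nat.sub_0_r.
Qed.

Lemma Yv_parent m n v j :
  (j < m)%nat -> Yv m (assign (addrs m (S n)) v) n [j] = Ylevel m n (block (m ^ n) j v).
Proof.
  intros Hj. change [j] with ([] ++ [j]). rewrite Yv_app. apply Yv_local.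
  intros l Hl. rewrite app_nil_r. now apply assign_parent.
Qed.

Lemma Nv_parent m wt n v j :
  (j < m)%nat -> Nv m (assign (addrs m (S n)) v) wt n [j] = Nlevel m wt n (block (m ^ n) j v).
Proof.
  intros Hj. change [j] with ([] ++ [j]). rewrite Nv_app. apply Nv_local.
  intros l Hl. rewrite app_nil_r. now apply assign_parent.
Qed.

Lemma Ylevel_S m n v :
  Ylevel m (S n) v = (block_sum (m ^ n) (Ylevel m n) m v - 1)%nat.
Proof.
  unfold Ylevel at 1. cbn [Yv]. rewrite block_sum_blocks. do 2 f_equal.
  apply map_ext_in. intros j Hj. apply in_seq in Hj. apply Yv_parent. lia.
Qed.

Lemma Nlevel_S m wt n v :
  Nlevel m wt (S n) v =
  if (1 <=? block_sum (m ^ n) (Ylevel m n) m v)%nat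
  then block_sum (m ^ n) (Nlevel m wt n) m v else O.
Proof.
  unfold Nlevel at 1. cbn [Nv]. rewrite !block_sum_blocks.
  rewrite (map_ext_in (fun j => Yv m (assign (addrs m (S n)) v) n [j])
                      (fun j => Ylevel m n (block (m ^ n) j v)))
    by (intros j Hj; apply in_seq in Hj; apply Yv_parent; lia).
  rewrite (map_ext_in (fun j => Nv m (assign (addrs m (S n)) v) wt n [j])
                      (fun j => Nlevel m wt n (block (m ^ n) j v)))
    by (intros j Hj; apply in_seq in Hj; apply Nv_parent; lia).
  reflexivity.
Qed.

(* With S, T the sums of Y_n, N_n over the
   m parents, Y_(n+1) = S - 1 and N_(n+1) = T on {S >= 1}, N_(n+1) = 0 else;
   the next two identities express the new moments through those of (S, T). *)

Lemma truncation_identity (x : R) (s : nat) : x <> 0 ->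
  x ^ (s - 1) + (x - 1) / x * (INR s * x ^ s) =
  (x - 1) * (INR (s - 1) * x ^ (s - 1)) + x ^ s.
Proof.
  intros Hx. destruct s as [|s]; [simpl; field; exact Hx|].
  replace (S s - 1)%nat with s by lia. rewrite S_INR. simpl pow. field. exact Hx.
Qed.

Lemma open_paths_identity (x : R) (s t : nat) : x <> 0 ->
  / x * (INR t * INR s * x ^ s) =
  INR (if (1 <=? s)%nat then t else O) * x ^ (s - 1) +
  INR (if (1 <=? s)%nat then t else O) * INR (s - 1) * x ^ (s - 1).
Proof.
  intros Hx. destruct s as [|s]; [simpl; ring|].
  replace (S s - 1)%nat with s by lia. rewrite S_INR. simpl. field. exact Hx.
Qed.

Lemma sum_moment_Y_closing m B A :
  (1 <= m)%nat -> (INR m - 1) * A = B ->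
  (INR m - 1) / INR m * sum_moment_Y B A m = B ^ m.
Proof.
  intros Hm Hrel. destruct m as [|k]; [lia|]. unfold sum_moment_Y.
  replace (S k - 1)%nat with k by lia. simpl pow. rewrite <- Hrel.
  field. apply not_0_INR. lia.
Qed.

Lemma sum_moment_NY_closing m B A C D :
  (2 <= m)%nat -> (INR m - 1) * A = B ->
  / INR m * sum_moment_NY B A C D m = B ^ (m - 1) * (C + D).
Proof.
  intros Hm Hrel. destruct m as [|[|k]]; [lia|lia|]. unfold sum_moment_NY.
  replace (S (S k) - 1)%nat with (S k) by lia. replace (S (S k) - 2)%nat with k by lia.
  replace (INR (S k)) with (INR (S (S k)) - 1) by (rewrite (S_INR (S k)); ring).
  simpl pow. rewrite <- Hrel. field. apply not_0_INR. lia.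
Qed.

Lemma level_step p m wt n B A C D :
  (2 <= m)%nat -> (forall k, 0 <= p k) ->
  Moments p (INR m) (m ^ n) (Ylevel m n) (Nlevel m wt n) B A C D ->
  (INR m - 1) * A = B ->
  exists B' A' C' D',
    Moments p (INR m) (m ^ S n) (Ylevel m (S n)) (Nlevel m wt (S n)) B' A' C' D' /\
    (INR m - 1) * A' = B' /\ C' + D' = B ^ (m - 1) * (C + D).
Proof.
  intros Hm Hp HM Hrel.
  assert (Hx : 1 <= INR m) by (apply (le_INR 1); lia).
  assert (Hx0 : INR m <> 0) by lra.
  pose proof (Moments_block_sum _ _ _ _ _ _ _ _ _ HM m) as Hsum.
  assert (HyS : forall v, (Ylevel m (S n) v <= block_sum (m ^ n) (Ylevel m n) m v)%nat)
    by (intros v; rewrite Ylevel_S; lia).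
  assert (HnS : forall v, (Nlevel m wt (S n) v <= block_sum (m ^ n) (Nlevel m wt n) m v)%nat)
    by (intros v; rewrite Nlevel_S; destruct (_ <=? _)%nat; lia).
  destruct (Moments_le _ _ _ _ _ _ _ _ _ _ _ Hp Hx HyS HnS Hsum) as (B' & A' & C' & D' & HM').
  exists B', A', C', D'. split; [exact HM'|].
  destruct HM' as [HB' [HA' [HC' HD']]]. destruct Hsum as [HsB [HsA [_ HsD]]].
  split.
  - assert (E : (INR m - 1) * A' + B ^ m =
                B' + (INR m - 1) / INR m * sum_moment_Y B A m).
    { eapply HasExp_unique;
        [exact (HasExp_plus _ _ _ _ _ _ (HasExp_scal _ _ _ (INR m - 1) _ HA') HsB)|].
      eapply HasExp_ext;
        [|exact (HasExp_plus _ _ _ _ _ _ HB' (HasExp_scal _ _ _ ((INR m - 1) / INR m) _ HsA))].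
      intros v. cbv beta. rewrite Ylevel_S. now apply truncation_identity. }
    rewrite sum_moment_Y_closing in E by (lia || exact Hrel). lra.
  - rewrite <- sum_moment_NY_closing with (A := A) by (lia || exact Hrel).
    eapply HasExp_unique; [exact (HasExp_plus _ _ _ _ _ _ HC' HD')|].
    eapply HasExp_ext; [|exact (HasExp_scal _ _ _ (/ INR m) _ HsD)].
    intros v. cbv beta. rewrite Ylevel_S, Nlevel_S. now apply open_paths_identity.
Qed.

Lemma target_moment p m wt n B A C D :
  Moments p (INR m) (m ^ n) (Ylevel m n) (Nlevel m wt n) B A C D ->
  Expect p m n (fun c => INR m ^ Yv m c n nil * (1 + INR (Yv m c n nil))
                         * INR (Nv m c wt n nil)) (C + D).
Proof.
  intros [_ [_ [HC HD]]]. unfold Expect.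
  eapply HasExp_ext; [|exact (HasExp_plus _ _ _ _ _ _ HC HD)].
  intros v. unfold Ylevel, Nlevel. ring.
Qed.

(* Generation 0: a single leaf with law p; N_0 = wt(Y_0) <= 1 is dominated
   by the constant 1, whose tilted moments are those of Y_0. *)
Lemma level0_moments p m wt A B :
  (1 <= m)%nat -> (forall k, 0 <= p k) -> (forall y, (wt y <= 1)%nat) ->
  infinite_sum (fun y => p y * INR y * INR m ^ y) A ->
  infinite_sum (fun y => p y * INR m ^ y) B ->
  exists C D, Moments p (INR m) (m ^ 0) (Ylevel m 0) (Nlevel m wt 0) B A C D.
Proof.
  intros Hm Hp Hwt HA HB.
  assert (Hleaf : forall y, Ylevel m 0 [y] = y).
  { intros y. unfold Ylevel. simpl. now destruct (list_eq_dec Nat.eq_dec [] []). }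
  assert (HB0 : HasExp p 1 (fun l => INR m ^ Ylevel m 0 l) B).
  { apply HasExp_single. eapply infinite_sum_ext; [|exact HB].
    intros y. now rewrite Hleaf. }
  assert (HA0 : HasExp p 1 (fun l => INR (Ylevel m 0 l) * INR m ^ Ylevel m 0 l) A).
  { apply HasExp_single. eapply infinite_sum_ext; [|exact HA].
    intros y. rewrite Hleaf. ring. }
  assert (Hone : Moments p (INR m) 1 (Ylevel m 0) (fun _ => 1%nat) B A B A).
  { repeat split; [exact HB0|exact HA0| |];
      eapply HasExp_ext; try eassumption; intros l; simpl; ring. }
  assert (Hx : 1 <= INR m) by (apply (le_INR 1); exact Hm).
  assert (Hn0 : forall l, (Nlevel m wt 0 l <= 1)%nat) by (intros l; apply Hwt).
  destruct (Moments_le _ _ _ _ _ _ (Nlevel m wt 0) _ _ _ _ Hp Hx (fun l => le_n _) Hn0 Hone)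
    as (B' & A' & C & D & HB' & HA' & HC & HD).
  exists C, D. rewrite (HasExp_unique _ _ _ _ _ HB0 HB'), (HasExp_unique _ _ _ _ _ HA0 HA').
  repeat split; assumption.
Qed.

Lemma Rprod_upto_S e k : Rprod_upto e (S k) = Rprod_upto e k * e k.
Proof.
  unfold Rprod_upto. rewrite seq_S, map_app, fold_right_app. simpl.
  induction (map e (seq 0 k)) as [|a l IH]; simpl; [ring|]. rewrite IH. ring.
Qed.

Lemma weight_le1 sharp i y : (weight sharp i y <= 1)%nat.
Proof. unfold weight. destruct sharp; [auto|]. destruct (Nat.eqb y i); auto. Qed.

Theorem proposition5p1 :
  forall (m : nat) (p : nat -> R),
    (2 <= m)%nat ->
    (forall y, 0 <= p y) -> infinite_sum p 1 ->
    forall A B : R,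
      infinite_sum (fun y => p y * INR y * INR m ^ y) A ->
      infinite_sum (fun y => p y * INR m ^ y) B ->
      (INR m - 1) * A = B ->
      forall (i : nat) (sharp : bool) (n : nat), (1 <= n)%nat ->
        exists (E0 : R) (e : nat -> R),
          Expect p m 0 (fun c => INR m ^ Yv m c 0 nil * (1 + INR (Yv m c 0 nil))
                                 * INR (Nv m c (weight sharp i) 0 nil)) E0 /\
          (forall k, (k < n)%nat -> Expect p m k (fun c => INR m ^ Yv m c k nil) (e k)) /\
          Expect p m n (fun c => INR m ^ Yv m c n nil * (1 + INR (Yv m c n nil))
                                 * INR (Nv m c (weight sharp i) n nil))
                 (E0 * Rprod_upto (fun k => e k ^ (m - 1)) n).
Proof.
  intros m p Hm Hp _ A B HA HB Hrel i sharp n _.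
  destruct (level0_moments p m (weight sharp i) A B) as (C0 & D0 & H0);
    [lia|exact Hp|apply weight_le1|exact HA|exact HB|].
  assert (Hlevels : forall k, exists B' A' C' D',
             Moments p (INR m) (m ^ k) (Ylevel m k) (Nlevel m (weight sharp i) k) B' A' C' D'
             /\ (INR m - 1) * A' = B').
  { intros k. induction k as [|k (B' & A' & C' & D' & HM & Hr)].
    - exists B, A, C0, D0. split; assumption.
    - destruct (level_step p m _ k B' A' C' D' Hm Hp HM Hr) as (B'' & A'' & C'' & D'' & HM' & Hr' & _).
      exists B'', A'', C'', D''. split; assumption. }
  destruct (functional_choice (fun k b => Expect p m k (fun c => INR m ^ Yv m c k nil) b))
    as [e He].
  { intros k. destruct (Hlevels k) as (B' & _ & _ & _ & [HB' _] & _). now exists B'. }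
  assert (Hprod : forall k, exists B' A' C' D',
             Moments p (INR m) (m ^ k) (Ylevel m k) (Nlevel m (weight sharp i) k) B' A' C' D'
             /\ (INR m - 1) * A' = B'
             /\ C' + D' = (C0 + D0) * Rprod_upto (fun k => e k ^ (m - 1)) k).
  { intros k. induction k as [|k (B' & A' & C' & D' & HM & Hr & HE)].
    - exists B, A, C0, D0. repeat split; try apply H0; [exact Hrel|]. unfold Rprod_upto. simpl. ring.
    - destruct (level_step p m _ k B' A' C' D' Hm Hp HM Hr) as (B'' & A'' & C'' & D'' & HM' & Hr' & HE').
      exists B'', A'', C'', D''. repeat split; try apply HM'; [exact Hr'|].
      rewrite HE', HE, Rprod_upto_S, (HasExp_unique _ _ _ _ _ (proj1 HM) (He k)). ring. }
  exists (C0 + D0), e. split; [exact (target_moment _ _ _ _ _ _ _ _ H0)|].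
  split; [intros k _; apply He|].
  destruct (Hprod n) as (B' & A' & C' & D' & HM & _ & HE). rewrite <- HE.
  exact (target_moment _ _ _ _ _ _ _ _ HM).
Qed.
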